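(* For every sufficiently large integer $n$, there is a complete Riemannian metric of positive Ricci curvature on $\mathbb{R}^n$ such that for every point $p\in\mathbb{R}^n$, $$\limsup_{r\to\infty}\frac{\operatorname{diam}(\partial B(p,r))}{r}\geq 1.$$
   Context: $\partial B(p,r)$ is the set of points at distance exactly $r$ from $p$, and its diameter is measured with the Riemannian distance of the metric on $\mathbb{R}^n$. *)

From HB Require Import structures.
From mathcomp Require Import all_boot all_order all_algebra.
From mathcomp Require Import all_classical all_reals all_analysis.
Set Implicit Arguments. Unset Strict Implicit. Unset Printing Implicit Defensive.
Import Order.TTheory GRing.Theory Num.Theory.
Import numFieldNormedType.Exports.
Local Open Scope classical_set_scope.
Local Open Scope ring_scope.

Section RiemDefs.
Variables (R : realType) (n : nat).
Notation V := 'rV[R]_n.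

Definition ebasis (i : 'I_n) : V := delta_mx 0 i.

Definition partial (i : 'I_n) (f : V -> R) : V -> R :=
  fun x => derive f x (ebasis i).

Definition iter_partial (l : seq 'I_n) (f : V -> R) : V -> R :=
  foldr partial f l.

Definition smooth (f : V -> R) : Prop :=
  forall l : seq 'I_n,
    continuous (iter_partial l f) /\
    forall (i : 'I_n) (x : V), derivable (iter_partial l f) x (ebasis i).

Definition riemannian_metric (g : V -> 'M[R]_n) : Prop :=
  (forall i j, smooth (fun x => g x i j)) /\
  (forall x, (g x)^T = g x) /\
  (forall x (v : V), v != 0 -> 0 < \sum_i \sum_j v 0 i * v 0 j * g x i j).

Definition christoffel (g : V -> 'M[R]_n) (k i j : 'I_n) (x : V) : R :=
  2^-1 * \sum_l invmx (g x) k l *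
    (partial i (fun y => g y j l) x + partial j (fun y => g y i l) x
     - partial l (fun y => g y i j) x).

Definition ricci (g : V -> 'M[R]_n) (i j : 'I_n) (x : V) : R :=
  \sum_k (partial k (christoffel g k i j) x - partial j (christoffel g k i k) x)
  + \sum_k \sum_l (christoffel g k k l x * christoffel g l i j x
                   - christoffel g k j l x * christoffel g l i k x).

Definition positive_ricci (g : V -> 'M[R]_n) : Prop :=
  forall x (v : V), v != 0 -> 0 < \sum_i \sum_j v 0 i * v 0 j * ricci g i j x.

(* C^1 curves R -> R^n (only their restriction to [0,1] matters) *)
Definition C1_curve (c : R -> V) : Prop :=
  (forall t, derivable c t 1) /\ continuous (derive1 c).

Definition curve_length (g : V -> 'M[R]_n) (c : R -> V) : R :=
  Rintegral (@lebesgue_measure R) `[0, 1]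
    (fun t => Num.sqrt (\sum_i \sum_j
        (derive1 c t) 0 i * (derive1 c t) 0 j * g (c t) i j)).

Definition riem_dist (g : V -> 'M[R]_n) (p q : V) : R :=
  inf [set L | exists c, [/\ C1_curve c, c 0 = p, c 1 = q &
                            L = curve_length g c]].

Definition complete_metric (g : V -> 'M[R]_n) : Prop :=
  forall u : nat -> V,
    (forall e : R, 0 < e -> exists N, forall m k, (N <= m)%N -> (N <= k)%N ->
        riem_dist g (u m) (u k) < e) ->
    exists l : V, forall e : R, 0 < e -> exists N, forall m, (N <= m)%N ->
        riem_dist g (u m) l < e.

Definition metric_sphere (g : V -> 'M[R]_n) (p : V) (r : R) : set V :=
  [set q | riem_dist g p q = r].

(* diameter (in the extended reals; -oo for the empty set) *)
Definition riem_diam (g : V -> 'M[R]_n) (A : set V) : \bar R :=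
  ereal_sup [set ((riem_dist g x y)%:E) | x in A & y in A].

End RiemDefs.

(* The metric g(x) = I + x x^T / (1 + |x|^2) is the one induced on the graph of
   x |-> sqrt (1 + |x|^2), the upper sheet of a hyperboloid in Euclidean R^{n+1}.
   Its Christoffel symbols are Gamma^k_ij = sigma x_k (delta_ij - rho x_i x_j), and
   its Ricci tensor is alpha I + beta x x^T, whose eigenvalues alpha and
   alpha + beta |x|^2 are positive as soon as n >= 3 (the hyperboloid is strictly
   convex).  Since |v|^2 <= g(x)(v, v) <= 2 |v|^2, the Riemannian distance lies
   between the Euclidean distance and sqrt 2 times it, which gives completeness.
   The metric is invariant under the linear reflections of R^n.  Given p, reflect
   across a hyperplane through 0 and p with unit normal e: the points p + t e and
   p - t e lie on the same metric sphere about p, of radius r <= 2 t, and are at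
   distance at least 2 t >= r from each other. *)
From HB Require Import structures.
From mathcomp Require Import all_boot all_order all_algebra.
From mathcomp Require Import all_classical all_reals all_analysis.
From mathcomp Require Import ring lra.
Import Order.TTheory GRing.Theory Num.Theory.
Import numFieldNormedType.Exports.
Local Open Scope classical_set_scope.
Local Open Scope ring_scope.
Set Implicit Arguments. Unset Strict Implicit. Unset Printing Implicit Defensive.

Lemma continuous_sumf (R : numFieldType) (T : topologicalType) (W : normedModType R)
    m (f : 'I_m -> T -> W) :
  (forall i, continuous (f i)) -> continuous (fun t => \sum_i f i t).
Proof.
move=> hf; rewrite -(fct_sumE _ _ f).
elim/big_ind : _ => [t|g h cg ch t|i _]; last exact: hf.
- exact: cst_continuous.
- by have := continuousD (cg t) (ch t).
Qed.

Lemma is_derive_sumf (R : numFieldType) (V W : normedModType R) m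
    (h : 'I_m -> V -> W) (dh : 'I_m -> W) x v :
  (forall i, is_derive x v (h i) (dh i)) ->
  is_derive x v (fun y => \sum_i h i y) (\sum_i dh i).
Proof. by move=> hd; rewrite -(fct_sumE _ _ h); exact: is_derive_sum. Qed.

Lemma is_derive_inv (R : numFieldType) (V : normedModType R) (f : V -> R) x v df :
  f x != 0 -> is_derive x v f df ->
  is_derive x v (fun y => (f y)^-1) (- (f x) ^- 2 * df).
Proof.
move=> fx0 [df_ <-]; apply: DeriveDef; first exact: derivableV.
by rewrite deriveV.
Qed.

Lemma is_derive1_linear_comp (R : realType) (U W : normedModType R)
    (f : {linear U -> W}) (c : R -> U) t :
  continuous f -> derivable c t 1 -> is_derive t 1 (f \o c) (f ('D_1 c t)).
Proof.
move=> cf /derivable1_diffP dc.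
have df := linear_differentiable (c t) cf.
apply: DeriveDef; first exact/derivable1_diffP/differentiable_comp.
rewrite deriveE; last exact: differentiable_comp.
by rewrite diff_comp // diff_lin //= deriveE.
Qed.

Section HyperboloidMetric.
Variables (R : realType) (n : nat).
Local Notation V := 'rV[R]_n.

(** * Euclidean geometry of R^n *)

Definition kdelta (i j : 'I_n) : R := (i == j)%:R.

Lemma kdeltaC i j : kdelta i j = kdelta j i.
Proof. by rewrite /kdelta eq_sym. Qed.

Lemma sum_kdeltal (F : 'I_n -> R) i : \sum_k kdelta k i * F k = F i.
Proof.
rewrite (bigD1 i) //= /kdelta eqxx mul1r big1 ?addr0 // => k /negbTE ->.
by rewrite mul0r.
Qed.

Lemma sum_kdeltar (F : 'I_n -> R) i : \sum_k kdelta i k * F k = F i.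
Proof. by under eq_bigr do rewrite kdeltaC; exact: sum_kdeltal. Qed.

Definition dot (u v : V) : R := \sum_i u 0 i * v 0 i.
Definition sqnorm (u : V) : R := dot u u.

Lemma dotC u v : dot u v = dot v u.
Proof. by apply: eq_bigr => i _; rewrite mulrC. Qed.

Lemma dotDl u w v : dot (u + w) v = dot u v + dot w v.
Proof. by rewrite /dot -big_split; apply: eq_bigr => i _; rewrite mxE mulrDl. Qed.

Lemma dotZl k u v : dot (k *: u) v = k * dot u v.
Proof. by rewrite /dot mulr_sumr; apply: eq_bigr => i _; rewrite mxE mulrA. Qed.

Lemma dotNl u v : dot (- u) v = - dot u v.
Proof. by rewrite -scaleN1r dotZl mulN1r. Qed.

Lemma dotBl u w v : dot (u - w) v = dot u v - dot w v.
Proof. by rewrite dotDl dotNl. Qed.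

Lemma dotZr k u v : dot u (k *: v) = k * dot u v.
Proof. by rewrite dotC dotZl dotC. Qed.

Lemma dotNr u v : dot u (- v) = - dot u v.
Proof. by rewrite dotC dotNl dotC. Qed.

Lemma dotBr u v w : dot u (v - w) = dot u v - dot u w.
Proof. by rewrite dotC dotBl !(dotC u). Qed.

Lemma sqnorm_ge0 v : 0 <= sqnorm v.
Proof. by apply: sumr_ge0 => i _; rewrite -expr2 sqr_ge0. Qed.

Lemma sqnorm_eq0 v : (sqnorm v == 0) = (v == 0).
Proof.
apply/idP/eqP => [/eqP v0|->].
  have sq_ge0 k : true -> 0 <= v 0 k * v 0 k by rewrite -expr2 sqr_ge0.
  apply/rowP => i; rewrite mxE.
  have /eqP := psumr_eq0P sq_ge0 v0 (i := i) isT.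
  by rewrite mulf_eq0 orbb => /eqP.
by rewrite /sqnorm /dot big1 // => i _; rewrite mxE mul0r.
Qed.

Lemma sqnorm_gt0 v : v != 0 -> 0 < sqnorm v.
Proof. by move=> v0; rewrite lt_def sqnorm_ge0 sqnorm_eq0 v0. Qed.

Lemma sqnormN v : sqnorm (- v) = sqnorm v.
Proof. by rewrite /sqnorm dotNl dotNr opprK. Qed.

Lemma ebasis_coord k i : ebasis R k 0 i = kdelta k i.
Proof. by rewrite /ebasis mxE /kdelta eqxx eq_sym. Qed.

Lemma dot_ebasis x k : dot x (ebasis R k) = x 0 k.
Proof.
rewrite /dot; under eq_bigr do rewrite ebasis_coord kdeltaC mulrC.
exact: sum_kdeltal.
Qed.

Lemma sqnorm_ebasis k : sqnorm (ebasis R k) = 1.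
Proof. by rewrite /sqnorm dot_ebasis ebasis_coord /kdelta eqxx. Qed.

(* Lagrange's identity: the defect in Cauchy-Schwarz is a sum of squares. *)
Lemma cauchy_schwarz x v : dot x v ^+ 2 <= sqnorm x * sqnorm v.
Proof.
have lagrange : \sum_i \sum_j (x 0 i * v 0 j - x 0 j * v 0 i) ^+ 2
    = 2 * (sqnorm x * sqnorm v - dot x v ^+ 2).
  have e i j : (x 0 i * v 0 j - x 0 j * v 0 i) ^+ 2 =
      (x 0 i * x 0 i) * (v 0 j * v 0 j) + (v 0 i * v 0 i) * (x 0 j * x 0 j)
      - (2 * (x 0 i * v 0 i)) * (x 0 j * v 0 j) by ring.
  under eq_bigr do under eq_bigr do rewrite e.
  under eq_bigr do rewrite sumrB big_split /= -!mulr_sumr.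
  by rewrite sumrB big_split /= -!mulr_suml -mulr_sumr /sqnorm /dot expr2; ring.
have : 0 <= \sum_i \sum_j (x 0 i * v 0 j - x 0 j * v 0 i) ^+ 2.
  by apply: sumr_ge0 => i _; apply: sumr_ge0 => j _; apply: sqr_ge0.
by rewrite lagrange pmulr_rge0 // subr_ge0.
Qed.

Lemma sqnorm_normalize v : v != 0 -> sqnorm ((Num.sqrt (sqnorm v))^-1 *: v) = 1.
Proof.
move=> v0; have sv := sqnorm_gt0 v0.
rewrite /sqnorm dotZl dotZr mulrA -expr2 exprVn sqr_sqrtr ?ltW //.
by rewrite mulVf // gt_eqF.
Qed.

Lemma exists_unit_orthogonal (p : V) : (2 <= n)%N ->
  exists2 e, sqnorm e = 1 & dot p e = 0.
Proof.
move=> n2; pose i0 : 'I_n := Ordinal (ltnW n2); pose i1 : 'I_n := Ordinal n2.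
pose w : V := p 0 i1 *: ebasis R i0 - p 0 i0 *: ebasis R i1.
have pw : dot p w = 0 by rewrite dotBr !dotZr !dot_ebasis; ring.
have [w0 | w0] := eqVneq w 0.
  exists (ebasis R i0); first exact: sqnorm_ebasis.
  have : dot w (ebasis R i1) = 0 by rewrite w0 /dot big1 // => i _; rewrite mxE mul0r.
  rewrite dotBl !dotZl !dot_ebasis !ebasis_coord /kdelta eqxx /= mulr0 mulr1 sub0r.
  by move=> /eqP; rewrite oppr_eq0 => /eqP.
exists ((Num.sqrt (sqnorm w))^-1 *: w); first exact: sqnorm_normalize.
by rewrite dotZr pw mulr0.
Qed.

Lemma continuous_dot (T : topologicalType) (f g : T -> V) :
  continuous f -> continuous g -> continuous (fun t => dot (f t) (g t)).
Proof.
move=> cf cg; apply: continuous_sumf => i t.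
have ci (h : T -> V) : continuous h -> continuous (fun s => h s 0 i).
  move=> ch s; apply: (@continuous_comp _ _ _ h (fun M : V => M 0 i) s (ch s)).
  exact: coord_continuous.
exact: continuousM (ci f cf t) (ci g cg t).
Qed.

Definition rho (x : V) : R := (1 + sqnorm x)^-1.
Definition sigma (x : V) : R := (1 + 2 * sqnorm x)^-1.

Definition hmetric (x : V) : 'M[R]_n :=
  \matrix_(i, j) (kdelta i j + rho x * (x 0 i * x 0 j)).

Definition hform (x v : V) : R := sqnorm v + rho x * dot x v ^+ 2.

Lemma rho_gt0 x : 0 < rho x.
Proof. by rewrite /rho invr_gt0; have := sqnorm_ge0 x; lra. Qed.

Lemma sigma_gt0 x : 0 < sigma x.
Proof. by rewrite /sigma invr_gt0; have := sqnorm_ge0 x; lra. Qed.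

Lemma rhoK x : rho x * (1 + sqnorm x) = 1.
Proof. by rewrite /rho mulVf // gt_eqF //; have := sqnorm_ge0 x; lra. Qed.

Lemma sigmaK x : sigma x * (1 + 2 * sqnorm x) = 1.
Proof. by rewrite /sigma mulVf // gt_eqF //; have := sqnorm_ge0 x; lra. Qed.

Lemma rho_sigma x : rho x - sigma x - rho x * sigma x * sqnorm x = 0.
Proof.
transitivity (rho x * sigma x * ((1 + 2 * sqnorm x) - (1 + sqnorm x) - sqnorm x)
   - rho x * (sigma x * (1 + 2 * sqnorm x) - 1) + sigma x * (rho x * (1 + sqnorm x) - 1)).
  by ring.
by rewrite sigmaK rhoK !subrr; ring.
Qed.

Lemma hmetric_formE (x v : V) :
  \sum_i \sum_j v 0 i * v 0 j * hmetric x i j = hform x v.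
Proof.
have e i j : v 0 i * v 0 j * hmetric x i j
    = kdelta j i * (v 0 i * v 0 j) + rho x * ((x 0 i * v 0 i) * (x 0 j * v 0 j)).
  by rewrite mxE kdeltaC; ring.
under eq_bigr do under eq_bigr do rewrite e.
under eq_bigr do rewrite big_split /= sum_kdeltal -mulr_sumr -mulr_sumr.
by rewrite big_split /= -mulr_sumr -mulr_suml /hform /sqnorm /dot expr2.
Qed.

Lemma hform_le x v : hform x v <= 2 * sqnorm v.
Proof.
have hq := rho_gt0 x; have hw := sqnorm_ge0 v.
have e : rho x * sqnorm x = 1 - rho x by have := rhoK x; lra.
have : rho x * dot x v ^+ 2 <= rho x * (sqnorm x * sqnorm v).
  by rewrite ler_pM2l // cauchy_schwarz.
rewrite mulrA e /hform.
have : 0 <= rho x * sqnorm v by rewrite mulr_ge0 // ltW.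
nra.
Qed.

Lemma dot_unit_le_hform x v e : sqnorm e = 1 -> dot v e ^+ 2 <= hform x v.
Proof.
move=> e1; apply: (le_trans (cauchy_schwarz _ _)).
rewrite e1 mulr1 lerDl mulr_ge0 ?sqr_ge0 //.
exact/ltW/rho_gt0.
Qed.

(** * Smoothness *)

#[local] Instance is_derive_coord (x v : V) i :
  is_derive x v (fun y : V => y 0 i) (v 0 i).
Proof.
apply: DeriveDef; first exact/diff_derivable/differentiable_coord.
rewrite deriveE; last exact: differentiable_coord.
have @f : {linear V -> R}.
  by exists (fun N : V => N 0 i); do 2![eexists]; do ?[constructor];
     rewrite ?mxE// => ? *; rewrite ?mxE//; move=> ?; rewrite !mxE.
rewrite (_ : (fun _ => _) = f) //.
by rewrite diff_lin //; apply: coord_continuous.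
Qed.

#[local] Instance is_derive_sqnorm x v : is_derive x v sqnorm (2 * dot x v).
Proof.
apply: is_derive_eq.
  exact: (is_derive_sumf (fun i =>
    is_deriveM (is_derive_coord x v i) (is_derive_coord x v i))).
by rewrite /dot mulr_sumr; apply: eq_bigr => i _; rewrite /GRing.scale /=; ring.
Qed.

#[local] Instance is_derive_rho x v : is_derive x v rho (- rho x ^+ 2 * (2 * dot x v)).
Proof.
have hx : 1 + sqnorm x != 0 by rewrite gt_eqF //; have := sqnorm_ge0 x; lra.
apply: is_derive_eq; first exact: is_derive_inv.
by rewrite /rho /GRing.scale /= add0r exprVn.
Qed.

#[local] Instance is_derive_sigma x v :
  is_derive x v sigma (- sigma x ^+ 2 * (2 * (2 * dot x v))).
Proof.
have hx : 1 + 2 * sqnorm x != 0 by rewrite gt_eqF //; have := sqnorm_ge0 x; lra.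
apply: is_derive_eq; first exact: is_derive_inv.
by rewrite /sigma /GRing.scale /= add0r exprVn; congr (_ * _); ring.
Qed.

Lemma differentiable_rho x : differentiable rho x.
Proof.
apply: differentiableV; last by rewrite gt_eqF //; have := sqnorm_ge0 x; lra.
apply: differentiableD; first exact: differentiable_cst.
rewrite (_ : sqnorm = \sum_i (fun y : V => y 0 i * y 0 i)); last first.
  by rewrite fct_sumE; apply/funext.
by apply: differentiable_sum => i; apply: differentiableM; exact: differentiable_coord.
Qed.

(* Closed under partial derivatives because d rho = - 2 rho^2 x. *)
Inductive rho_poly : (V -> R) -> Prop :=
| rho_poly_cst c : rho_poly (fun _ => c)
| rho_poly_coord i : rho_poly (fun y => y 0 i)
| rho_poly_rho : rho_poly rho
| rho_poly_add f h : rho_poly f -> rho_poly h -> rho_poly (fun y => f y + h y)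
| rho_poly_mul f h : rho_poly f -> rho_poly h -> rho_poly (fun y => f y * h y).

Lemma rho_poly_ext f h : f =1 h -> rho_poly f -> rho_poly h.
Proof. by move=> /funext ->. Qed.

Lemma rho_poly_differentiable f : rho_poly f -> forall x, differentiable f x.
Proof.
elim => [c|i||f1 h _ IHf _ IHh|f1 h _ IHf _ IHh] x.
- exact: differentiable_cst.
- exact: differentiable_coord.
- exact: differentiable_rho.
- exact: differentiableD.
- exact: differentiableM.
Qed.

Lemma rho_poly_is_derive f : rho_poly f -> forall x v, is_derive x v f ('D_v f x).
Proof. by move=> Hf x v; exact/derivableP/diff_derivable/rho_poly_differentiable. Qed.

Lemma rho_poly_partial f : rho_poly f -> forall k, rho_poly (partial k f).
Proof.
elim => [c|i||f1 h Hf IHf Hh IHh|f1 h Hf IHf Hh IHh] k.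
- apply: (@rho_poly_ext (fun _ => 0)); last exact: rho_poly_cst.
  by move=> x; rewrite /partial derive_val.
- apply: (@rho_poly_ext (fun _ => kdelta k i)); last exact: rho_poly_cst.
  by move=> x; rewrite /partial derive_val ebasis_coord.
- apply: (@rho_poly_ext (fun y => rho y * rho y * (-2 * y 0 k))).
    by move=> x; rewrite /partial derive_val dot_ebasis; ring.
  by do !apply: rho_poly_mul; constructor.
- have df := rho_poly_is_derive Hf; have dh := rho_poly_is_derive Hh.
  apply: (@rho_poly_ext (fun y => partial k f1 y + partial k h y)).
    move=> x; have dfx := df x (ebasis R k); have dhx := dh x (ebasis R k).
    by rewrite /partial [RHS]derive_val.
  exact: rho_poly_add.
- have df := rho_poly_is_derive Hf; have dh := rho_poly_is_derive Hh.
  apply: (@rho_poly_ext (fun y => f1 y * partial k h y + h y * partial k f1 y)).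
    move=> x; have dfx := df x (ebasis R k); have dhx := dh x (ebasis R k).
    by rewrite /partial [RHS]derive_val.
  by apply: rho_poly_add; apply: rho_poly_mul.
Qed.

Lemma rho_poly_smooth f : rho_poly f -> smooth f.
Proof.
move=> Hf l; have Hl : rho_poly (iter_partial l f).
  by elim: l => [|a l IH] //=; exact: rho_poly_partial.
split=> [x|i x].
  exact/differentiable_continuous/rho_poly_differentiable.
exact/diff_derivable/rho_poly_differentiable.
Qed.

Lemma hmetric_riemannian : riemannian_metric hmetric.
Proof.
split; [|split].
- move=> i j; apply: rho_poly_smooth.
  apply: (@rho_poly_ext (fun y => kdelta i j + rho y * (y 0 i * y 0 j))).
    by move=> y; rewrite mxE.
  by do !constructor.
- by move=> x; apply/matrixP => i j; rewrite !mxE kdeltaC (mulrC (x 0 j)).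
- move=> x v v0; rewrite hmetric_formE /hform.
  apply: (lt_le_trans (sqnorm_gt0 v0)); rewrite lerDl.
  exact/mulr_ge0/sqr_ge0/ltW/rho_gt0.
Qed.

(** * Curvature *)

Lemma invmx_hmetric x :
  invmx (hmetric x) = \matrix_(i, j) (kdelta i j - sigma x * (x 0 i * x 0 j)).
Proof.
set H := \matrix_(i, j) _.
have gH : hmetric x *m H = 1%:M.
  apply/matrixP => i j; rewrite !mxE.
  have e l : hmetric x i l * H l j =
      kdelta i l * (kdelta l j - sigma x * (x 0 l * x 0 j))
      + kdelta l j * (rho x * x 0 i * x 0 l)
      - (rho x * sigma x * x 0 i * x 0 j) * (x 0 l * x 0 l).
    by rewrite !mxE; ring.
  under eq_bigr do rewrite e.
  rewrite sumrB big_split /= sum_kdeltar sum_kdeltal -mulr_sumr.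
  transitivity (kdelta i j
    + (x 0 i * x 0 j) * (rho x - sigma x - rho x * sigma x * sqnorm x)).
    by rewrite /sqnorm /dot; ring.
  by rewrite rho_sigma mulr0 addr0.
have [u _] := mulmx1_unit gH.
by rewrite -[invmx _]mulmx1 -gH mulmxA mulVmx // mul1mx.
Qed.

Lemma partial_hmetric i j l x : partial i (fun y => hmetric y j l) x =
  - rho x ^+ 2 * (2 * x 0 i) * (x 0 j * x 0 l)
  + rho x * (kdelta i j * x 0 l + x 0 j * kdelta i l).
Proof.
under [fun y => _]funext do rewrite mxE.
rewrite /partial derive_val dot_ebasis !ebasis_coord /GRing.scale /=; ring.
Qed.

Lemma christoffel_hmetric k i j : christoffel hmetric k i j =
  fun x => sigma x * x 0 k * (kdelta i j - rho x * (x 0 i * x 0 j)).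
Proof.
apply/funext => x; rewrite /christoffel invmx_hmetric.
set C := 2 * rho x * (kdelta i j - rho x * (x 0 i * x 0 j)).
have e l : (\matrix_(i, j) (kdelta i j - sigma x * (x 0 i * x 0 j))) k l *
    (partial i (fun y => hmetric y j l) x + partial j (fun y => hmetric y i l) x
     - partial l (fun y => hmetric y i j) x)
  = kdelta k l * (x 0 l * C) - (sigma x * x 0 k) * ((x 0 l * x 0 l) * C).
  by rewrite !partial_hmetric mxE /C (kdeltaC j i) (kdeltaC l i) (kdeltaC l j); ring.
under eq_bigr do rewrite e.
rewrite sumrB sum_kdeltar -mulr_sumr -mulr_suml.
apply/eqP; rewrite -subr_eq0; apply/eqP.
transitivity (x 0 k * (kdelta i j - rho x * (x 0 i * x 0 j)) *
   (rho x - sigma x - rho x * sigma x * sqnorm x)).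
  by rewrite /C /sqnorm /dot; field.
by rewrite rho_sigma mulr0.
Qed.

Lemma partial_christoffel_hmetric k a b c x :
  partial k (christoffel hmetric a b c) x =
    - 4 * sigma x ^+ 2 * x 0 k * x 0 a * (kdelta b c - rho x * (x 0 b * x 0 c))
    + sigma x * kdelta k a * (kdelta b c - rho x * (x 0 b * x 0 c))
    + sigma x * x 0 a * (2 * rho x ^+ 2 * x 0 k * x 0 b * x 0 c
                         - rho x * (kdelta k b * x 0 c + x 0 b * kdelta k c)).
Proof.
rewrite christoffel_hmetric /partial derive_val dot_ebasis !ebasis_coord.
by rewrite /GRing.scale /=; ring.
Qed.

Lemma christoffel_hmetric_div i j x :
  \sum_k partial k (christoffel hmetric k i j) x =
    - 4 * sigma x ^+ 2 * sqnorm x * (kdelta i j - rho x * (x 0 i * x 0 j))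
    + n%:R * (sigma x * (kdelta i j - rho x * (x 0 i * x 0 j)))
    + 2 * sigma x * rho x ^+ 2 * sqnorm x * (x 0 i * x 0 j)
    - sigma x * rho x * (x 0 j * x 0 i + x 0 i * x 0 j).
Proof.
have e k : partial k (christoffel hmetric k i j) x =
    (x 0 k * x 0 k) * (- 4 * sigma x ^+ 2 * (kdelta i j - rho x * (x 0 i * x 0 j))
                       + 2 * sigma x * rho x ^+ 2 * (x 0 i * x 0 j))
    + sigma x * (kdelta i j - rho x * (x 0 i * x 0 j))
    - sigma x * rho x * (x 0 j * (kdelta k i * x 0 k) + x 0 i * (kdelta k j * x 0 k)).
  have kk : kdelta k k = 1 by rewrite /kdelta eqxx.
  by rewrite partial_christoffel_hmetric kk; ring.
under eq_bigr do rewrite e.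
rewrite sumrB big_split /= -mulr_suml sumr_const card_ord -mulr_natl.
by rewrite -mulr_sumr big_split /= -!mulr_sumr !sum_kdeltal /sqnorm /dot; ring.
Qed.

Lemma christoffel_hmetric_trace_partial i j x :
  \sum_k partial j (christoffel hmetric k i k) x =
    - 4 * sigma x ^+ 2 * x 0 j * x 0 i
    + 4 * sigma x ^+ 2 * rho x * sqnorm x * (x 0 j * x 0 i) + sigma x * kdelta i j
    - sigma x * rho x * x 0 i * x 0 j
    + 2 * sigma x * rho x ^+ 2 * sqnorm x * (x 0 j * x 0 i)
    - sigma x * rho x * sqnorm x * kdelta j i - sigma x * rho x * x 0 i * x 0 j.
Proof.
have e k : partial j (christoffel hmetric k i k) x =
    - 4 * sigma x ^+ 2 * x 0 j * (kdelta i k * x 0 k)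
    + (x 0 k * x 0 k) * (4 * sigma x ^+ 2 * rho x * (x 0 j * x 0 i)
                         + 2 * sigma x * rho x ^+ 2 * (x 0 j * x 0 i)
                         - sigma x * rho x * kdelta j i)
    + sigma x * (kdelta j k * kdelta i k)
    - sigma x * rho x * x 0 i * (kdelta j k * x 0 k)
    - sigma x * rho x * x 0 i * (kdelta j k * x 0 k).
  by rewrite partial_christoffel_hmetric; ring.
under eq_bigr do rewrite e.
by rewrite !sumrB !big_split /= -!mulr_sumr -mulr_suml !sum_kdeltar /sqnorm /dot; ring.
Qed.

Lemma christoffel_hmetric_trace_prod i j x :
  \sum_k \sum_l christoffel hmetric k k l x * christoffel hmetric l i j x =
    sigma x ^+ 2 * (kdelta i j - rho x * (x 0 i * x 0 j))
    * (sqnorm x - rho x * sqnorm x ^+ 2).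
Proof.
set C := sigma x ^+ 2 * (kdelta i j - rho x * (x 0 i * x 0 j)).
have e k l : christoffel hmetric k k l x * christoffel hmetric l i j x =
    kdelta k l * (C * x 0 k * x 0 l) - (rho x * C * (x 0 k * x 0 k)) * (x 0 l * x 0 l).
  by rewrite !christoffel_hmetric /C; ring.
under eq_bigr do under eq_bigr do rewrite e.
under eq_bigr do rewrite sumrB sum_kdeltar -mulr_sumr.
have e2 k : C * x 0 k * x 0 k - rho x * C * (x 0 k * x 0 k) * (\sum_l x 0 l * x 0 l)
    = (x 0 k * x 0 k) * (C * (1 - rho x * sqnorm x)) by rewrite /sqnorm /dot; ring.
under eq_bigr do rewrite e2.
by rewrite -mulr_suml /sqnorm /dot; ring.
Qed.

Lemma christoffel_hmetric_cross_prod i j x :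
  \sum_k \sum_l christoffel hmetric k j l x * christoffel hmetric l i k x =
    sigma x ^+ 2 * (x 0 j - rho x * x 0 j * sqnorm x)
    * (x 0 i - rho x * x 0 i * sqnorm x).
Proof.
have e k l : christoffel hmetric k j l x * christoffel hmetric l i k x =
    kdelta j l * (sigma x ^+ 2 * x 0 k * (kdelta i k - rho x * (x 0 i * x 0 k)) * x 0 l)
    - (sigma x ^+ 2 * rho x * x 0 j * x 0 k * (kdelta i k - rho x * (x 0 i * x 0 k)))
      * (x 0 l * x 0 l).
  by rewrite !christoffel_hmetric; ring.
under eq_bigr do under eq_bigr do rewrite e.
under eq_bigr do rewrite sumrB sum_kdeltar -mulr_sumr.
have e2 k : sigma x ^+ 2 * x 0 k * (kdelta i k - rho x * (x 0 i * x 0 k)) * x 0 j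
    - sigma x ^+ 2 * rho x * x 0 j * x 0 k * (kdelta i k - rho x * (x 0 i * x 0 k))
      * (\sum_l x 0 l * x 0 l)
  = (sigma x ^+ 2 * x 0 j * (1 - rho x * sqnorm x)) * (kdelta i k * x 0 k)
    - (sigma x ^+ 2 * x 0 j * (1 - rho x * sqnorm x) * rho x * x 0 i) * (x 0 k * x 0 k).
  by rewrite /sqnorm /dot; ring.
under eq_bigr do rewrite e2.
by rewrite sumrB -!mulr_sumr sum_kdeltar /sqnorm /dot; ring.
Qed.

Definition alpha (x : V) : R :=
  - 4 * sigma x ^+ 2 * sqnorm x + n%:R * sigma x - sigma x
  + sigma x * rho x * sqnorm x + sigma x ^+ 2 * sqnorm x
  - sigma x ^+ 2 * rho x * sqnorm x ^+ 2.

Definition beta (x : V) : R :=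
  - n%:R * sigma x * rho x + 3 * sigma x ^+ 2 + sigma x ^+ 2 * rho x * sqnorm x.

Lemma ricci_hmetric i j x :
  ricci hmetric i j x = alpha x * kdelta i j + beta x * (x 0 i * x 0 j).
Proof.
rewrite /ricci sumrB; under [X in _ + X]eq_bigr do rewrite sumrB.
rewrite sumrB christoffel_hmetric_div christoffel_hmetric_trace_partial.
rewrite christoffel_hmetric_trace_prod christoffel_hmetric_cross_prod.
by rewrite /alpha /beta (kdeltaC j i); ring.
Qed.

Lemma alpha_gt0 x : (3 <= n)%N -> 0 < alpha x.
Proof.
move=> n3.
have -> : alpha x = sigma x * (n%:R - 3 + 2 * sigma x + rho x * sqnorm x
                               + sigma x * sqnorm x * rho x)
    - 2 * sigma x * (sigma x * (1 + 2 * sqnorm x) - 1)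
    - sigma x ^+ 2 * sqnorm x * (rho x * (1 + sqnorm x) - 1).
  by rewrite /alpha; ring.
rewrite sigmaK rhoK !subrr !mulr0 !subr0.
have hn : (3 : R) <= n%:R by rewrite ler_nat.
have hs := sigma_gt0 x; have hr := rho_gt0 x; have hx := sqnorm_ge0 x.
apply: mulr_gt0 => //.
have : 0 <= rho x * sqnorm x by rewrite mulr_ge0 // ltW.
have : 0 <= sigma x * sqnorm x * rho x by rewrite !mulr_ge0 // ltW.
lra.
Qed.

Lemma alpha_beta_gt0 x : (2 <= n)%N -> 0 < alpha x + beta x * sqnorm x.
Proof.
move=> n2.
have -> : alpha x + beta x * sqnorm x = (n%:R - 1) * sigma x * rho x
    - n%:R * sigma x * (rho x * (1 + sqnorm x) - 1)
    + sigma x * (rho x * (1 + sqnorm x) - 1).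
  by rewrite /alpha /beta; ring.
rewrite rhoK !subrr !mulr0 subr0 addr0.
have hn : (2 : R) <= n%:R by rewrite ler_nat.
by rewrite !mulr_gt0 ?sigma_gt0 ?rho_gt0 //; lra.
Qed.

(* By Cauchy-Schwarz, alpha |v|^2 + beta <x, v>^2 is at least
   min (alpha, alpha + beta |x|^2) |v|^2. *)
Lemma hmetric_positive_ricci : (3 <= n)%N -> positive_ricci hmetric.
Proof.
move=> n3 x v v0.
have -> : \sum_i \sum_j v 0 i * v 0 j * ricci hmetric i j x
    = alpha x * sqnorm v + beta x * dot x v ^+ 2.
  have e i j : v 0 i * v 0 j * ricci hmetric i j x
      = kdelta j i * (alpha x * (v 0 i * v 0 j))
        + beta x * (x 0 i * v 0 i) * (x 0 j * v 0 j).
    by rewrite ricci_hmetric (kdeltaC i j); ring.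
  under eq_bigr do under eq_bigr do rewrite e.
  under eq_bigr do rewrite big_split /= sum_kdeltal -mulr_sumr.
  by rewrite big_split /= -mulr_sumr -mulr_suml -mulr_sumr /sqnorm /dot expr2; ring.
have ha := alpha_gt0 x n3; have hab := alpha_beta_gt0 x (ltnW n3).
have hv := sqnorm_gt0 v0.
have [hb|hb] := lerP 0 (beta x).
  by apply: (lt_le_trans (mulr_gt0 ha hv)); rewrite lerDl mulr_ge0 // sqr_ge0.
have cs : beta x * (sqnorm x * sqnorm v) <= beta x * dot x v ^+ 2.
  by rewrite ler_wnM2l ?cauchy_schwarz // ltW.
apply: (lt_le_trans (mulr_gt0 hab hv)).
by rewrite mulrDl -mulrA lerD2l.
Qed.

(** * Lengths of curves *)

Lemma C1_curve_continuous (c : R -> V) : C1_curve c -> continuous c.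
Proof. by move=> [dc _] t; apply/differentiable_continuous/derivable1_diffP. Qed.

Lemma is_derive_curve_coord (c : R -> V) (t : R) i :
  derivable c t 1 -> is_derive t 1 (fun s => c s 0 i) (derive1 c t 0 i).
Proof.
move=> dc; apply: DeriveDef; first exact: (derivable_mxP c t 1).1 dc 0 i.
by rewrite derive1E (derive_mx dc) mxE.
Qed.

Lemma continuous_hform (T : topologicalType) (f g : T -> V) :
  continuous f -> continuous g -> continuous (fun t => hform (f t) (g t)).
Proof.
move=> cf cg t; rewrite /hform /rho /sqnorm.
have cd := continuous_dot.
have ne : 1 + dot (f t) (f t) != 0.
  by rewrite gt_eqF //; have := sqnorm_ge0 (f t); rewrite /sqnorm; lra.
have cr : {for t, continuous (fun s => (1 + dot (f s) (f s))^-1)}.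
  apply: (@continuousV _ _ (fun s => 1 + dot (f s) (f s)) t ne).
  by have := continuousD (@cst_continuous _ _ (1 : R) t) (cd _ _ _ cf cf t).
by have := continuousD (cd _ _ _ cg cg t)
  (continuousM cr (continuousM (cd _ _ _ cf cg t) (cd _ _ _ cf cg t))).
Qed.

Lemma curve_length_hmetric (c : R -> V) : curve_length hmetric c =
  Rintegral (@lebesgue_measure R) `[0, 1] (fun t => Num.sqrt (hform (c t) (derive1 c t))).
Proof. by congr Rintegral; apply/funext => t; rewrite hmetric_formE. Qed.

Lemma hform_curve_integrable (c : R -> V) : C1_curve c ->
  (@lebesgue_measure R).-integrable `[0, 1]
     (EFin \o (fun t => Num.sqrt (hform (c t) (derive1 c t)))).
Proof.
move=> hc; apply: continuous_compact_integrable; first exact: segment_compact.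
apply: continuous_subspaceT => t.
apply: (@continuous_comp _ _ _ (fun t => hform (c t) (derive1 c t)) Num.sqrt t).
  exact: continuous_hform (C1_curve_continuous hc) hc.2 t.
exact: sqrt_continuous.
Qed.

Lemma curve_length_ge0 (c : R -> V) : 0 <= curve_length hmetric c.
Proof. by apply: Rintegral_ge0 => t _; apply: sqrtr_ge0. Qed.

(* Fundamental theorem of calculus for t |-> <c t, e>, together with
   <c' t, e>^2 <= g(c t)(c' t, c' t). *)
Lemma dot_unit_le_curve_length (c : R -> V) e : C1_curve c -> sqnorm e = 1 ->
  dot (c 1 - c 0) e <= curve_length hmetric c.
Proof.
move=> hc e1; rewrite curve_length_hmetric dotBl.
pose F t := dot (c t) e; pose f t := dot (derive1 c t) e.
have cF : continuous F.
  by apply: continuous_dot; [exact: C1_curve_continuous | exact: cst_continuous].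
have cf : continuous f by apply: continuous_dot; [exact: hc.2 | exact: cst_continuous].
have dF (t : R) : is_derive t 1 F (f t).
  apply: is_derive_eq.
    exact: (is_derive_sumf (fun i => is_deriveM (is_derive_curve_coord i (hc.1 t))
                                               (is_derive_cst (e 0 i) t 1))).
  by apply: eq_bigr => i _; rewrite /GRing.scale /=; ring.
have <- : Rintegral (@lebesgue_measure R) `[0, 1] f = dot (c 1) e - dot (c 0) e.
  rewrite /Rintegral (@continuous_FTC2 R f F 0 1 ltr01 (continuous_subspaceT cf)) //.
  - split.
    + by move=> t _; case: (dF t).
    + exact: cvg_at_right_filter (cF 0).
    + exact: cvg_at_left_filter (cF 1).
  - by move=> t _; rewrite derive1E; apply: derive_val.
apply: le_Rintegral; first exact: measurable_itv.
- apply: continuous_compact_integrable; first exact: segment_compact.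
  exact/continuous_subspaceT.
- exact: hform_curve_integrable.
- move=> t _; apply: le_trans (ler_norm _) _; rewrite -sqrtr_sqr.
  exact: ler_wsqrtr (dot_unit_le_hform _ _ e1).
Qed.

Definition segment (a w : V) (t : R) : V := a + t *: w.

Lemma is_derive_segment (a w : V) (t : R) : is_derive t 1 (segment a w) w.
Proof.
have dw : is_derive t 1 ( *:%R^~ w) w.
  apply: DeriveDef; first exact/diff_derivable/ex_diff.
  by rewrite deriveE ?diff_val ?scale1r //; exact: ex_diff.
by have := is_deriveD (is_derive_cst a t 1) dw; rewrite add0r.
Qed.

Lemma derive1_segment (a w : V) : derive1 (segment a w) = fun _ => w.
Proof.
apply/funext => t; have := is_derive_segment a w t.
by rewrite derive1E => ?; rewrite derive_val.
Qed.

Lemma segment0 (a w : V) : segment a w 0 = a.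
Proof. by rewrite /segment scale0r addr0. Qed.

Lemma segment1 (a b : V) : segment a (b - a) 1 = b.
Proof. by rewrite /segment scale1r addrC subrK. Qed.

Lemma C1_segment (a w : V) : C1_curve (segment a w).
Proof.
split=> [t|]; first by case: (is_derive_segment a w t).
by rewrite derive1_segment; exact: cst_continuous.
Qed.

Lemma curve_length_segment (a w : V) :
  curve_length hmetric (segment a w) <= Num.sqrt (2 * sqnorm w).
Proof.
rewrite curve_length_hmetric derive1_segment.
apply: (@le_trans _ _
  (Rintegral (@lebesgue_measure R) `[0, 1] (fun _ => Num.sqrt (2 * sqnorm w)))).
  apply: le_Rintegral; first exact: measurable_itv.
  - by have := hform_curve_integrable (C1_segment a w); rewrite derive1_segment.
  - apply: continuous_compact_integrable; first exact: segment_compact.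
    exact/continuous_subspaceT/cst_continuous.
  - by move=> t _; apply/ler_wsqrtr/hform_le.
have unit_itv : @lebesgue_measure R `[0, 1]%classic = 1%:E.
  by rewrite lebesgue_measure_itv /= lte_fin ltr01 -EFinD subr0.
rewrite Rintegral_cst; last exact: measurable_itv.
by rewrite [X in fine X](_ : _ = 1%:E) ?unit_itv //= mulr1.
Qed.

(** * Reflections *)

Definition reflection (e x : V) : V := x - (2 * dot x e) *: e.

Lemma reflection_linear (e : V) : linear (reflection e).
Proof.
move=> k x y; rewrite /reflection dotDl dotZl.
by apply/rowP => j; rewrite !mxE; ring.
Qed.

HB.instance Definition _ e :=
  GRing.isLinear.Build R V V *:%R (reflection e) (reflection_linear e).

Lemma continuous_reflection (e : V) : continuous (reflection e).
Proof.
have cd : continuous (fun y : V => dot y e).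
  by apply: continuous_dot => [y|y]; [exact: cvg_id | exact: cst_continuous].
have cs : continuous (fun y : V => 2 * dot y e).
  by move=> y; exact: continuousM (@cst_continuous _ _ (2 : R) y) (cd y).
move=> x.
by have := continuousB (@cvg_id _ (nbhs x)) (@continuousZr_tmp _ _ _ _ e _ (cs x)).
Qed.

Lemma dot_reflection (e u v : V) : sqnorm e = 1 ->
  dot (reflection e u) (reflection e v) = dot u v.
Proof.
move=> e1; have ee : dot e e = 1 := e1.
by rewrite /reflection !(dotBl, dotBr, dotZl, dotZr) (dotC e v) ee; ring.
Qed.

Lemma reflectionK (e : V) : sqnorm e = 1 -> cancel (reflection e) (reflection e).
Proof.
move=> e1 x; have ee : dot e e = 1 := e1.
rewrite {1}/reflection dotBl dotZl ee mulr1.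
by apply/rowP => j; rewrite /reflection !mxE; ring.
Qed.

Lemma reflection_fixed (e p : V) : dot p e = 0 -> reflection e p = p.
Proof. by move=> pe; rewrite /reflection pe mulr0 scale0r subr0. Qed.

Lemma derive1_reflection (e : V) (c : R -> V) : C1_curve c ->
  derive1 (reflection e \o c) = reflection e \o derive1 c.
Proof.
move=> hc; apply/funext => t.
have d := is_derive1_linear_comp (@continuous_reflection e) (hc.1 t).
by rewrite derive1E derive_val /= derive1E.
Qed.

Lemma C1_reflection (e : V) (c : R -> V) : C1_curve c -> C1_curve (reflection e \o c).
Proof.
move=> hc; split=> [t|].
  by case: (is_derive1_linear_comp (@continuous_reflection e) (hc.1 t)).
rewrite derive1_reflection // => t.
by apply: continuous_comp; [exact: hc.2 | exact: continuous_reflection].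
Qed.

Lemma curve_length_reflection (e : V) (c : R -> V) : sqnorm e = 1 -> C1_curve c ->
  curve_length hmetric (reflection e \o c) = curve_length hmetric c.
Proof.
move=> e1 hc; rewrite !curve_length_hmetric derive1_reflection //.
by congr Rintegral; apply/funext => t; rewrite /hform /rho /sqnorm /= !dot_reflection.
Qed.

Lemma riem_dist_le_length (c : R -> V) : C1_curve c ->
  riem_dist hmetric (c 0) (c 1) <= curve_length hmetric c.
Proof.
move=> hc; apply: ge_inf; last by exists c.
by exists 0 => _ [d [_ _ _ ->]]; exact: curve_length_ge0.
Qed.

Lemma riem_dist_ge (a b : V) (m : R) :
  (forall c, C1_curve c -> c 0 = a -> c 1 = b -> m <= curve_length hmetric c) ->
  m <= riem_dist hmetric a b.
Proof.
move=> hm; apply: lb_le_inf; last by move=> _ [c [hc c0 c1 ->]]; exact: hm.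
exists (curve_length hmetric (segment a (b - a))), (segment a (b - a)).
by rewrite segment0 segment1; split=> //; exact: C1_segment.
Qed.

Lemma riem_dist_ge0 (a b : V) : 0 <= riem_dist hmetric a b.
Proof. by apply: riem_dist_ge => c _ _ _; exact: curve_length_ge0. Qed.

Lemma riem_dist_le_segment (a b : V) :
  riem_dist hmetric a b <= Num.sqrt (2 * sqnorm (b - a)).
Proof.
have := riem_dist_le_length (C1_segment a (b - a)).
rewrite segment0 segment1 => /le_trans; apply.
exact: curve_length_segment.
Qed.

Lemma dot_unit_le_riem_dist (a b e : V) :
  sqnorm e = 1 -> dot (b - a) e <= riem_dist hmetric a b.
Proof.
by move=> e1; apply: riem_dist_ge => c hc <- <-; exact: dot_unit_le_curve_length.
Qed.

Lemma riem_dist_reflection (e a b : V) : sqnorm e = 1 ->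
  riem_dist hmetric (reflection e a) (reflection e b) = riem_dist hmetric a b.
Proof.
move=> e1.
suff le a' b' :
    riem_dist hmetric (reflection e a') (reflection e b') <= riem_dist hmetric a' b'.
  by apply/eqP; rewrite eq_le le -{1}(reflectionK e1 a) -{1}(reflectionK e1 b) le.
apply: riem_dist_ge => c hc <- <-.
rewrite -(curve_length_reflection e1 hc).
exact: riem_dist_le_length (C1_reflection e hc).
Qed.

(** * Completeness *)

Lemma coord_le_norm (v : V) i : `|v 0 i| <= `|v|.
Proof.
by rewrite [leRHS]/Num.Def.normr /= mx_normrE; apply/bigmax_geP; right; exists (0, i).
Qed.

Lemma sqnorm_le_norm (v : V) : sqnorm v <= n%:R * `|v| ^+ 2.
Proof.
have -> : n%:R * `|v| ^+ 2 = \sum_(i < n) `|v| ^+ 2.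
  by rewrite sumr_const card_ord mulr_natl.
rewrite /sqnorm /dot.
apply: ler_sum => i _; apply: le_trans (ler_norm _) _.
by rewrite normrM expr2; apply: ler_pM; rewrite ?normr_ge0 ?coord_le_norm.
Qed.

Lemma coord_le_riem_dist (a b : V) i : `|b 0 i - a 0 i| <= riem_dist hmetric a b.
Proof.
have := dot_unit_le_riem_dist a b (sqnorm_ebasis i).
have := dot_unit_le_riem_dist a b (etrans (sqnormN _) (sqnorm_ebasis i)).
rewrite dotNr dot_ebasis !mxE => h1 h2.
by rewrite ler_norml; apply/andP; split; lra.
Qed.

Lemma norm_le_riem_dist (a b : V) : `|b - a| <= riem_dist hmetric a b.
Proof.
rewrite [leLHS]/Num.Def.normr /= mx_normrE; apply: bigmax_le; first exact: riem_dist_ge0.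
by move=> [i j] _; rewrite (ord1 i) !mxE; exact: coord_le_riem_dist.
Qed.

Lemma riem_dist_le_norm (a b : V) :
  riem_dist hmetric a b <= Num.sqrt (2 * n%:R) * `|b - a|.
Proof.
apply: (le_trans (riem_dist_le_segment a b)).
rewrite -[`|b - a|]normr_id -sqrtr_sqr -sqrtrM ?mulr_ge0 ?ler0n //.
by apply: ler_wsqrtr; rewrite -mulrA ler_pM2l // sqnorm_le_norm.
Qed.

Lemma hmetric_complete : complete_metric hmetric.
Proof.
move=> u hu.
have /cvg_ex [l ul] : cvg (u @ \oo).
  apply: cauchy_cvg; apply: cauchy_exP => e e0.
  have [N hN] := hu e e0; exists (u N); exists N => // m /= Nm.
  rewrite mx_norm_ball /ball_ /=.
  exact: le_lt_trans (norm_le_riem_dist (u m) (u N)) (hN m N Nm (leqnn N)).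
exists l => e e0.
have K0 : 0 < Num.sqrt (2 * n%:R : R) + 1 by have := sqrtr_ge0 (2 * n%:R : R); lra.
have sK : Num.sqrt (2 * n%:R : R) <= Num.sqrt (2 * n%:R) + 1 by rewrite lerDl.
have [N _ hN] := (cvgrPdist_lt _ _).1 ul _ (divr_gt0 e0 K0).
exists N => m Nm; apply: le_lt_trans (riem_dist_le_norm _ _) _.
apply: le_lt_trans (ler_wpM2r (normr_ge0 _) sK) _.
by rewrite mulrC -ltr_pdivlMr // hN.
Qed.

(** * Metric spheres *)

Lemma riem_dist_unit_step (a e : V) (t : R) : sqnorm e = 1 -> 0 <= t ->
  t <= riem_dist hmetric a (a + t *: e) <= 2 * t.
Proof.
move=> e1 t0; have ee : dot e e = 1 := e1.
have d : a + t *: e - a = t *: e by rewrite addrC addKr.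
apply/andP; split.
  by have := dot_unit_le_riem_dist a (a + t *: e) e1; rewrite d dotZl ee mulr1.
apply: (le_trans (riem_dist_le_segment _ _)).
rewrite d /sqnorm dotZl dotZr ee mulr1.
rewrite -[X in _ <= X](@ger0_norm _ (2 * t)); last by lra.
rewrite -sqrtr_sqr; apply: ler_wsqrtr.
by rewrite expr2; have := mulr_ge0 t0 t0; nra.
Qed.

Lemma hmetric_sphere_diam (p : V) r0 : (2 <= n)%N ->
  exists r, [/\ r0 < r, 0 <= r &
                (r%:E <= riem_diam hmetric (metric_sphere hmetric p r))%E].
Proof.
move=> n2; have [e e1 pe] := exists_unit_orthogonal p n2.
have ee : dot e e = 1 := e1.
have m0 : 0 <= Num.max r0 0 by rewrite le_max lexx orbT.
have m1 : r0 <= Num.max r0 0 by rewrite le_max lexx.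
pose t := Num.max r0 0 + 1.
have t0 : 0 <= t by rewrite /t; lra.
pose r := riem_dist hmetric p (p + t *: e).
have /andP [tr r2t] := riem_dist_unit_step p e1 t0.
have refl : reflection e (p + t *: e) = p + (- t) *: e.
  by apply/rowP => j; rewrite /reflection dotDl dotZl pe ee !mxE; ring.
have on_sphere : metric_sphere hmetric p r (p + (- t) *: e).
  by rewrite /metric_sphere /= -refl -{1}(reflection_fixed pe) riem_dist_reflection.
have far : 2 * t <= riem_dist hmetric (p + t *: e) (p + (- t) *: e).
  have := dot_unit_le_riem_dist (p + t *: e) (p + (- t) *: e) (etrans (sqnormN e) e1).
  have -> : p + (- t) *: e - (p + t *: e) = (- 2 * t) *: e.
    by apply/rowP => j; rewrite !mxE; ring.
  by rewrite dotZl dotNr ee => h; lra.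
exists r; split; [rewrite /t in tr; lra | lra |].
apply: (@le_trans _ _ (riem_dist hmetric (p + t *: e) (p + (- t) *: e))%:E).
  by rewrite lee_fin; lra.
by apply: ereal_sup_ubound; exists (p + t *: e) => //; exists (p + (- t) *: e).
Qed.

End HyperboloidMetric.

Theorem corollary2 (R : realType) :
  exists N : nat, forall n : nat, (N <= n)%N ->
    exists g : 'rV[R]_n -> 'M[R]_n,
      [/\ riemannian_metric g, complete_metric g, positive_ricci g &
        forall p : 'rV[R]_n, forall eps : R, 0 < eps -> forall r0 : R,
          exists r : R, r0 < r /\
            (((1 - eps) * r)%:E <= riem_diam g (metric_sphere g p r))%E].
Proof.
exists 3%N => n n3; exists (@hmetric R n); split.
- exact: hmetric_riemannian.
- exact: hmetric_complete.
- exact: hmetric_positive_ricci.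
- move=> p eps eps0 r0.
  have [r [r0r r_ge0 diam]] := hmetric_sphere_diam p r0 (ltnW n3).
  exists r; split=> //; apply: le_trans diam; rewrite lee_fin.
  by have := mulr_ge0 (ltW eps0) r_ge0; lra.
Qed.
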